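(* In the BBoxER framework described in the context, fix $m_0,\omega,a,b$ and distinct datasets $D_1,\dots,D_n$. If $k_i\le 2$ for all $i$ and $n>2^b$, then the algorithm $A(m_0,D)=\mathrm{BBoxER}(m_0,\omega,D,a,b)$ is not vulnerable to data extraction for $(D_1,\dots,D_n)$. More generally, $A$ is not vulnerable to data extraction for $(D_1,\dots,D_n)$ whenever $n>\sup_D\prod_{i=1}^b k_i(\omega,D,a,b)$.
   Context: $\mathrm{BBoxER}(m_0,\omega,D,a,b)$ is the model output by: a black-box optimization algorithm $a$, deterministic given its seed $\omega$, initialized from $\omega$; at each iteration $i=1,\dots,b$ it proposes $x_i$ and model $m_i=\mathrm{modified}(m_0,x_i)$, declares a finite number $k_i=k_i(\omega,D,a,b)\ge1$ of possible comparison outcomes, and receives $\mathrm{choice}_i\in\{1,\dots,k_i\}$ computed by comparing $m_1,\dots,m_i$ on the dataset $D$; finally it outputs $\mathrm{modified}(m_0,\widehat x)$ where the recommendation $\widehat x$ is a deterministic function of $(\omega,a,b,\mathrm{choice}_1,\dots,\mathrm{choice}_b)$ (the algorithm accesses $D$ only through the $\mathrm{choice}_i$). Definition: an algorithm $A$ producing $A(m_0,D)$ from a model $m_0$ and a dataset $D$ is vulnerable to data extraction for $(D_1,\dots,D_n)$ (all distinct) if there exists a mapping $E$ such that $E(A(m_0,D_i))=i$ for all $i\in\{1,\dots,n\}$. *)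

From mathcomp Require Import all_boot.
Set Implicit Arguments. Unset Strict Implicit. Unset Printing Implicit Defensive.

(* A black-box optimization algorithm, once its identity [a], its seed [omega]
   and its budget [b] are fixed, is a deterministic procedure described by:
   - [propose i cs]  : the candidate x_i proposed at iteration i (1-based),
                       given the previous comparison outcomes
                       cs = [:: choice_1; ...; choice_(i-1)];
   - [arity i cs]    : the number k_i of possible comparison outcomes it
                       declares at iteration i, given the same history;
   - [recommend cs]  : the final recommendation x_hat, given all b outcomes. *)
Record bbo (X : Type) := BBO {
  propose : nat -> seq nat -> X;
  arity : nat -> seq nat -> nat;
  recommend : seq nat -> X }.

Section BBoxER.
Variables (Omega Alg X Model Dataset : Type).
Variable alg : Omega -> Alg -> nat -> bbo X.
Variable modified : Model -> X -> Model.
(* cmp D [:: m_1; ...; m_i] k : the comparison outcome obtained by comparing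
   m_1, ..., m_i on the dataset D, among k declared possible outcomes. *)
Variable cmp : Dataset -> seq Model -> nat -> nat.

Definition proposed_models (A : bbo X) (m0 : Model) (i : nat) (cs : seq nat) :
  seq Model :=
  [seq modified m0 (propose A j (take j.-1 cs)) | j <- iota 1 i].

Fixpoint choices (m0 : Model) (omega : Omega) (D : Dataset) (a : Alg) (b t : nat)
  : seq nat :=
  match t with
  | 0 => [::]
  | t'.+1 =>
      let A := alg omega a b in
      let cs := choices m0 omega D a b t' in
      rcons cs (cmp D (proposed_models A m0 t'.+1 cs) (arity A t'.+1 cs))
  end.

(* choice_i (1-based) *)
Definition choice m0 omega D a b (i : nat) : nat :=
  nth 0 (choices m0 omega D a b i) i.-1.

(* k_i(omega, D, a, b) (1-based) *)
Definition k_ m0 omega D a b (i : nat) : nat :=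
  arity (alg omega a b) i (choices m0 omega D a b i.-1).

Definition BBoxER (m0 : Model) (omega : Omega) (D : Dataset) (a : Alg) (b : nat)
  : Model :=
  modified m0 (recommend (alg omega a b) (choices m0 omega D a b b)).

End BBoxER.

Definition vulnerable (Model Dataset : Type) (A : Model -> Dataset -> Model)
  (m0 : Model) (n : nat) (Ds : 'I_n -> Dataset) : Prop :=
  exists E : Model -> 'I_n, forall i : 'I_n, E (A m0 (Ds i)) = i.

From Pilot Require Import Defs.
From mathcomp Require Import all_boot.
Set Implicit Arguments. Unset Strict Implicit.

(* The output of BBoxER depends on the dataset only through the history of
   comparison outcomes (choice_1, ..., choice_b).  These histories are the
   leaves of a tree whose node at depth j - 1 has k_j children, so there are at
   most sup_D prod_j k_j of them.  An extractor recovers i from the output, hence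
   from the history of D_i, so i |-> history(D_i) is injective and n cannot
   exceed that number of leaves. *)

Lemma size_sum_count (T : eqType) (f : T -> nat) (r : seq nat) (s : seq T) :
  uniq r -> {in s, forall x, f x \in r} ->
  size s = \sum_(c <- r) count (fun x => f x == c) s.
Proof.
move=> r_uniq f_r.
transitivity (\sum_(x <- s) \sum_(c <- r | f x == c) 1).
  rewrite -sum1_size !big_seq; apply: eq_bigr => x /f_r fx_r.
  by rewrite sum1_count (eq_count (eq_sym (f x))) count_uniq_mem ?fx_r.
by rewrite (exchange_big_dep xpredT) //; apply: eq_bigr => c _; rewrite sum1_count.
Qed.

(* [ar cs] is the number of possible outcomes after the history [cs]; outcomes
   are numbered from 1. *)
Definition admissible (ar : seq nat -> nat) (s : seq nat) : Prop :=
  forall j, j < size s -> 0 < nth 0 s j <= ar (take j s).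

Definition arity_prod (ar : seq nat -> nat) (s : seq nat) : nat :=
  \prod_(j < size s) ar (take j s).

Lemma admissible_behead ar c t :
  admissible ar (c :: t) -> admissible (fun u => ar (c :: u)) t.
Proof. by move=> adm j; apply: (adm j.+1). Qed.

Lemma arity_prod_cons ar c t :
  arity_prod ar (c :: t) = ar [::] * arity_prod (fun u => ar (c :: u)) t.
Proof. by rewrite /arity_prod big_ord_recl. Qed.

Lemma uniq_behead_filter_head c (S : seq (seq nat)) :
  uniq S -> {in S, forall s, 0 < size s} ->
  uniq [seq behead s | s <- S & head 0 s == c].
Proof.
move=> S_uniq S_pos; rewrite map_inj_in_uniq ?filter_uniq // => s1 s2.
rewrite !mem_filter => /andP[/eqP s1_c /S_pos s1_pos] /andP[/eqP s2_c /S_pos s2_pos].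
case: s1 s1_c s1_pos => // c1 t1 /= -> _.
by case: s2 s2_c s2_pos => // c2 t2 /= -> _ ->.
Qed.

Lemma size_admissible_le ar b N (S : seq (seq nat)) :
  uniq S ->
  (forall s, s \in S -> [/\ size s = b, admissible ar s & arity_prod ar s <= N]) ->
  size S <= N.
Proof.
elim: b ar N S => [|b IH] ar N S S_uniq S_ok.
  case: S S_uniq S_ok => [//|s S'] S_uniq S_ok.
  have [/size0nil s_nil _ prod_le] := S_ok s (mem_head _ _).
  have S_sub : {subset s :: S' <= [:: [::]]}.
    by move=> t /S_ok[/size0nil -> _ _]; apply: mem_head.
  apply: leq_trans (uniq_leq_size S_uniq S_sub) _.
  by rewrite s_nil /arity_prod big_ord0 in prod_le.
set k := ar [::].
have heads_iota : {in S, forall s, head 0 s \in iota 1 k}.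
  move=> [|c t] /S_ok[//= _ adm _].
  by rewrite mem_iota add1n ltnS; apply: (adm 0).
rewrite (size_sum_count (iota_uniq 1 k) heads_iota).
apply: (@leq_trans (\sum_(c <- iota 1 k) N %/ k)); last first.
  by rewrite big_const_seq count_predT size_iota iter_addn_0 leq_divM.
rewrite big_seq [leqRHS]big_seq; apply: leq_sum => c.
rewrite mem_iota add1n ltnS => /andP[c_gt0 c_le_k].
have k_gt0 : 0 < k by apply: leq_trans c_le_k.
rewrite -size_filter -(size_map behead); apply: (IH (fun u => ar (c :: u))).
  by apply: uniq_behead_filter_head => // s /S_ok[-> _ _].
move=> t /mapP[s]; rewrite mem_filter => /andP[/eqP s_c /S_ok[s_size adm prod_le]] ->.
case: s s_c s_size adm prod_le => //= c' t' -> [t_size] adm prod_le.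
split=> //; first exact: admissible_behead adm.
by rewrite leq_divRL // mulnC -arity_prod_cons.
Qed.

Section BBoxERHistories.
Variables (Omega Alg X Model Dataset : Type).
Variables (alg : Omega -> Alg -> nat -> bbo X) (modified : Model -> X -> Model).
Variable cmp : Dataset -> seq Model -> nat -> nat.
Variables (m0 : Model) (omega : Omega) (a : Alg) (b : nat).

Local Notation choices D t := (choices alg modified cmp m0 omega D a b t).
Local Notation choice D i := (choice alg modified cmp m0 omega D a b i).
Local Notation k_ D i := (k_ alg modified cmp m0 omega D a b i).

Definition history_arity (cs : seq nat) : nat := arity (alg omega a b) (size cs).+1 cs.

Lemma size_choices D t : size (choices D t) = t.
Proof. by elim: t => //= t IH; rewrite size_rcons IH. Qed.

Lemma take_choices D t u : t <= u -> take t (choices D u) = choices D t.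
Proof.
elim: u => [|u IH]; first by rewrite leqn0 => /eqP ->.
rewrite leq_eqVlt => /orP[/eqP ->|t_le_u]; first by rewrite take_oversize ?size_choices.
by rewrite /= -cats1 takel_cat ?IH // size_choices.
Qed.

Lemma k_E D i : i < b -> k_ D i.+1 = history_arity (take i (choices D b)).
Proof. by move=> i_lt; rewrite /history_arity take_choices ?size_choices // ltnW. Qed.

Lemma choice_E D i : i < b -> choice D i.+1 = nth 0 (choices D b) i.
Proof. by move=> i_lt; rewrite /Defs.choice -(take_choices D i_lt) nth_take. Qed.

Lemma admissible_choices D :
  (forall i, 1 <= i <= b -> 1 <= choice D i <= k_ D i) ->
  admissible history_arity (choices D b).
Proof.
move=> choice_range j; rewrite size_choices => j_lt.
by have := choice_range j.+1 j_lt; rewrite choice_E // k_E.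
Qed.

Lemma arity_prod_choices D :
  arity_prod history_arity (choices D b) = \prod_(1 <= i < b.+1) k_ D i.
Proof.
rewrite /arity_prod size_choices big_add1 big_mkord.
by apply: eq_bigr => i _; rewrite k_E.
Qed.

Lemma vulnerable_BBoxER_le N n (Ds : 'I_n -> Dataset) :
  (forall D i, 1 <= i <= b -> 1 <= choice D i <= k_ D i) ->
  (forall D, \prod_(1 <= i < b.+1) k_ D i <= N) ->
  vulnerable (fun m D => BBoxER alg modified cmp m omega D a b) m0 Ds ->
  n <= N.
Proof.
move=> choice_range prod_le [E extract].
have histories_inj : injective (fun i => choices (Ds i) b).
  by move=> i j /= eq_cs; rewrite -(extract i) -(extract j) /BBoxER eq_cs.
rewrite -[n]size_enum_ord -(size_map (fun i => choices (Ds i) b)).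
apply: (@size_admissible_le history_arity b); first by rewrite map_inj_uniq ?enum_uniq.
move=> _ /mapP[i _ ->]; split; first exact: size_choices.
- exact: admissible_choices (choice_range (Ds i)).
- by rewrite arity_prod_choices.
Qed.

End BBoxERHistories.

Theorem corollary2
  (Omega Alg X Model Dataset : Type)
  (alg : Omega -> Alg -> nat -> bbo X)
  (modified : Model -> X -> Model)
  (cmp : Dataset -> seq Model -> nat -> nat)
  (m0 : Model) (omega : Omega) (a : Alg) (b : nat)
  (n : nat) (Ds : 'I_n -> Dataset)
  (Hdistinct : injective Ds)
  (* framework: k_i >= 1 and choice_i \in {1, ..., k_i}, for every dataset *)
  (Hk_pos : forall (D : Dataset) (i : nat), 1 <= i <= b ->
     1 <= k_ alg modified cmp m0 omega D a b i)
  (Hchoice : forall (D : Dataset) (i : nat), 1 <= i <= b ->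
     1 <= choice alg modified cmp m0 omega D a b i
       <= k_ alg modified cmp m0 omega D a b i) :
  let A := fun (m : Model) (D : Dataset) => BBoxER alg modified cmp m omega D a b in
  ((forall (D : Dataset) (i : nat), 1 <= i <= b ->
      k_ alg modified cmp m0 omega D a b i <= 2) ->
    2 ^ b < n -> ~ vulnerable A m0 Ds)
  /\
  ((* n > sup_D prod_{i=1}^b k_i(omega, D, a, b)  (sup of naturals) *)
   (forall D : Dataset,
      \prod_(1 <= i < b.+1) k_ alg modified cmp m0 omega D a b i < n) ->
    ~ vulnerable A m0 Ds).
Proof.
move=> A; split=> [k_le2 n_gt | prod_lt extract].
  move=> /(vulnerable_BBoxER_le Hchoice (N := 2 ^ b)) n_le.
  suff : n <= 2 ^ b by rewrite leqNgt n_gt.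
  apply: n_le => D.
  have -> : 2 ^ b = \prod_(1 <= i < b.+1) 2 by rewrite prod_nat_const_nat subn1.
  rewrite big_seq [leqRHS]big_seq; apply: leq_prod => i.
  by rewrite mem_index_iota => /k_le2.
have n_gt0 : 0 < n by case: extract => E _; apply: leq_ltn_trans (ltn_ord (E m0)).
suff : n <= n.-1 by rewrite leqNgt ltn_predL n_gt0.
by apply: (vulnerable_BBoxER_le Hchoice _ extract) => D; rewrite -ltnS prednK.
Qed.
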